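(* Let $p$ be analytic in $\mathbb{D}$ with $p(0)=1$ and let $Q\in\mathcal{P}$. Suppose that $\alpha\geq 0$, $\beta>0$ and that $p$ satisfies $$p(z)Q(z)+\frac{zp'(z)}{\beta p(z)+\alpha}=1\qquad(z\in\mathbb{D}).$$ Then $\operatorname{Re}p(z)>0$ for all $z\in\mathbb{D}$.
   Context: $\mathbb{D}$ is the open unit disk. $\mathcal{P}$ (the Carathéodory class) is the class of analytic functions $q(z)=1+c_1z+c_2z^2+\cdots$ in $\mathbb{D}$ with $\operatorname{Re}q(z)>0$ for all $z\in\mathbb{D}$. *)

From Stdlib Require Import Reals.
From Coquelicot Require Import Coquelicot.

Open Scope C_scope.

Definition unit_disk (z : C) : Prop := (Cmod z < 1)%R.

Definition has_cderiv (f : C -> C) (z l : C) : Prop :=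
  @is_derive C_AbsRing C_NormedModule f z l.

Definition analytic_in_D (f : C -> C) : Prop :=
  forall z : C, unit_disk z -> @ex_derive C_AbsRing C_NormedModule f z.

Definition caratheodory (q : C -> C) : Prop :=
  analytic_in_D q /\ q 0 = 1 /\
  forall z : C, unit_disk z -> (0 < Re (q z))%R.

From Stdlib Require Import Reals Lra Classical ClassicalEpsilon.
From Coquelicot Require Import Coquelicot.
Open Scope C_scope.

(* If Re p fails to be positive somewhere in D, compactness yields a point z0
   of least modulus with Re p(z0) <= 0; z0 <> 0 since p(0) = 1.  Since Re p > 0
   on |z| < |z0|, a first-order expansion of p along the directions
   z0 (1 + s c), Re c < 0, gives Jack's lemma: p(z0) = i b and z0 p'(z0) = x is
   real with x <= 0.  Plugging these into the equation, b = 0 forces x = alpha > 0,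
   and b <> 0 forces beta x = Re Q(z0) (alpha^2 + beta^2 b^2) > 0. *)

Lemma Re_pos_near (f : C -> C) (t d : C) : has_cderiv f t d -> (0 < Re (f t))%R ->
  exists del, (0 < del)%R /\ forall z, (Cmod (z - t) < del)%R -> (0 < Re (f z))%R.
Proof.
  intros Hf Hpos.
  destruct (proj1 (filterlim_locally f (f t)) (ex_derive_continuous f t (ex_intro _ d Hf))
              (mkposreal _ Hpos)) as [del Hdel].
  exists del; split; [apply cond_pos |].
  intros z Hz.
  destruct (Hdel z) as [HRe _]; [exact Hz |].
  change (Rabs (Re (f z) - Re (f t)) < Re (f t))%R in HRe.
  apply Rabs_def2 in HRe. lra.
Qed.

Lemma Cmod_le_Rabs_Re_Im (w : C) : (Cmod w <= Rabs (Re w) + Rabs (Im w))%R.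
Proof.
  pose proof (Cmod2_alt w). pose proof (Cmod_ge_0 w).
  pose proof (pow2_abs (Re w)). pose proof (pow2_abs (Im w)).
  pose proof (Rabs_pos (Re w)). pose proof (Rabs_pos (Im w)).
  nra.
Qed.

Section LeastModulus.

Variable P : C -> Prop.
Hypothesis P_open : forall t, unit_disk t -> P t ->
  exists del, (0 < del)%R /\ forall z, (Cmod (z - t) < del)%R -> P z.

Lemma closed_disk_margin (r0 : R) : (r0 < 1)%R -> (forall z, (Cmod z <= r0)%R -> P z) ->
  exists d : posreal, forall z, unit_disk z -> (Cmod z < r0 + d)%R -> P z.
Proof.
  intros Hr0 Hall.
  (* A small square around t lies in P if |t| <= r0, and beyond radius r0 + del
     otherwise; compactness of [-1, 1]^2 makes del uniform. *)
  assert (Hcover : forall t : C, exists del : posreal, forall z,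
    (Rabs (Re z - Re t) < del)%R -> (Rabs (Im z - Im t) < del)%R -> ~ P z ->
    (r0 + del <= Cmod z)%R).
  { intros t.
    assert (Hsq : forall z, (Cmod (z - t) <= Rabs (Re z - Re t) + Rabs (Im z - Im t))%R)
      by (intros z; apply Cmod_le_Rabs_Re_Im).
    destruct (Rle_or_lt (Cmod t) r0) as [Hin | Hout].
    - destruct (P_open t ltac:(unfold unit_disk; lra) (Hall t Hin)) as [del [Hdel Hball]].
      exists (mkposreal (del / 2) ltac:(lra)); simpl.
      intros z Hu Hv HnP; exfalso; apply HnP, Hball.
      specialize (Hsq z); lra.
    - exists (mkposreal ((Cmod t - r0) / 4) ltac:(lra)); simpl.
      intros z Hu Hv _.
      pose proof (Cmod_triangle z (t - z)) as Htri.
      replace (z + (t - z)) with t in Htri by ring.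
      rewrite <- (Cmod_opp (t - z)) in Htri.
      replace (- (t - z)) with (z - t) in Htri by ring.
      specialize (Hsq z); lra. }
  destruct (choice _ Hcover) as [delta Hdelta].
  destruct (compactness_value_2d (-1) 1 (-1) 1 (fun u v => delta (u, v) : posreal)) as [d Hd].
  exists d. intros z Hz Hzd.
  apply NNPP; intro HnP.
  pose proof (Rmax_Cmod z) as Hmax.
  pose proof (Rmax_l (Rabs (fst z)) (Rabs (snd z))).
  pose proof (Rmax_r (Rabs (fst z)) (Rabs (snd z))).
  unfold unit_disk in Hz.
  apply (Hd (Re z) (Im z)); [apply Rabs_le_between; unfold Re; lra
                            | apply Rabs_le_between; unfold Im; lra |].
  intros [u [v [_ [_ [Hu [Hv Hdu]]]]]].
  specialize (Hdelta (u, v) z Hu Hv HnP). lra.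
Qed.

Lemma least_modulus_counterexample (z1 : C) : unit_disk z1 -> ~ P z1 ->
  exists z0, unit_disk z0 /\ ~ P z0 /\ forall z, (Cmod z < Cmod z0)%R -> P z.
Proof.
  unfold unit_disk; intros Hz1 HnP1.
  set (E := fun r => (r <= Cmod z1)%R /\ forall z, (Cmod z < r)%R -> P z).
  assert (HE0 : E 0%R).
  { split; [apply Cmod_ge_0 |]. intros z Hz. pose proof (Cmod_ge_0 z). lra. }
  assert (Hbound : bound E) by (exists (Cmod z1); intros r [Hr _]; exact Hr).
  destruct (completeness E Hbound (ex_intro _ _ HE0)) as [r0 [Hub Hlub]].
  assert (Hr0 : (r0 <= Cmod z1)%R) by (apply Hlub; intros r [Hr _]; exact Hr).
  assert (Hbelow : forall z, (Cmod z < r0)%R -> P z).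
  { intros z Hz. apply NNPP; intro HnP.
    assert (r0 <= Cmod z)%R; [| lra].
    apply Hlub. intros r [_ Hr]. apply Rnot_lt_le. intro Hzr. exact (HnP (Hr z Hzr)). }
  apply NNPP; intro Hno.
  assert (Hclosed : forall z, (Cmod z <= r0)%R -> P z).
  { intros z Hz. destruct (Rle_lt_or_eq_dec _ _ Hz) as [Hlt | Heq]; [exact (Hbelow z Hlt) |].
    apply NNPP; intro HnP. apply Hno. exists z.
    rewrite Heq; repeat split; [lra | exact HnP | exact Hbelow]. }
  assert (Hr0' : (r0 < Cmod z1)%R).
  { destruct (Rle_lt_or_eq_dec _ _ Hr0) as [| Heq]; [assumption |].
    exfalso. apply HnP1, Hclosed. lra. }
  destruct (closed_disk_margin r0 ltac:(lra) Hclosed) as [d Hd].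
  pose proof (cond_pos d).
  assert (Hmin : E (Rmin (r0 + d) (Cmod z1))).
  { split; [apply Rmin_r |]. intros z Hz.
    pose proof (Rmin_l (r0 + d) (Cmod z1)); pose proof (Rmin_r (r0 + d) (Cmod z1)).
    apply Hd; unfold unit_disk; lra. }
  specialize (Hub _ Hmin).
  assert (r0 < Rmin (r0 + d) (Cmod z1))%R by (apply Rmin_glb_lt; lra).
  lra.
Qed.

End LeastModulus.

Lemma Cmod_1_add_scal_lt_1 (c : C) (s : R) : (Re c < 0)%R -> (0 < s)%R ->
  (s * Cmod c ^ 2 < -2 * Re c)%R -> (Cmod (1 + RtoC s * c) < 1)%R.
Proof.
  intros Hc Hs Hsmall.
  pose proof (Cmod_ge_0 (1 + RtoC s * c)).
  assert (Hsq : (Cmod (1 + RtoC s * c) ^ 2 < 1)%R).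
  { rewrite Cmod2_alt. rewrite Cmod2_alt in Hsmall.
    destruct c as [c1 c2]; simpl in *. nra. }
  nra.
Qed.

Lemma has_cderiv_approx (f : C -> C) (z d : C) : has_cderiv f z d ->
  forall eps : R, (0 < eps)%R -> exists del : R, (0 < del)%R /\
  forall h : C, (Cmod h < del)%R -> (Cmod (f (z + h) - f z - h * d)%C <= eps * Cmod h)%R.
Proof.
  intros [_ Hdomin] eps Heps.
  destruct (Hdomin z (fun P HP => HP) (mkposreal eps Heps)) as [del Hdel].
  exists del; split; [apply cond_pos |].
  intros h Hh.
  specialize (Hdel (z + h)).
  unfold ball, norm, minus, plus, opp, scal in Hdel; simpl in Hdel.
  unfold AbsRing_ball, abs, minus, plus, opp, mult in Hdel; simpl in Hdel.
  replace (z + h + - z) with h in Hdel by ring.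
  replace (f (z + h) - f z - h * d) with (f (z + h) + - f z + - (h * d)) by ring.
  exact (Hdel Hh).
Qed.

Lemma real_nonpos_of_Re_mul_nonneg (w : C) :
  (forall c, (Re c < 0)%R -> (0 <= Re (c * w))%R) -> Im w = 0%R /\ (Re w <= 0)%R.
Proof.
  destruct w as [a b]; intros Hw.
  assert (Ha : (a <= 0)%R) by (specialize (Hw (RtoC (-1)) ltac:(simpl; lra)); simpl in Hw; lra).
  split; [| exact Ha]; simpl.
  apply NNPP; intro Hb.
  (* With e (1 - a) = b^2, the direction c = -e + i b gives Re (c w) = -b^2 / (1 - a) < 0. *)
  set (e := (b ^ 2 / (1 - a))%R).
  assert (He : (0 < e)%R) by (apply Rdiv_lt_0_compat; [apply pow2_gt_0 | lra]; exact Hb).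
  assert (Hea : (e * (1 - a) = b ^ 2)%R) by (unfold e; field; lra).
  specialize (Hw (- e, b)%R ltac:(simpl; lra)); simpl in Hw.
  pose proof (pow2_gt_0 b Hb). nra.
Qed.

Section Jack.

Variables (p : C -> C) (z0 d : C).
Hypothesis p_deriv : has_cderiv p z0 d.
Hypothesis Cmod_z0_pos : (0 < Cmod z0)%R.
Hypothesis Re_pos_inside : forall z, (Cmod z < Cmod z0)%R -> (0 < Re (p z))%R.

(* Moving from z0 to z0 (1 + s c) with Re c < 0 and small s > 0 enters the
   smaller disk, where Re p > 0; the first-order term is s Re (c z0 p'(z0)). *)
Lemma Re_first_order (c : C) (eps s0 : R) :
  (Re c < 0)%R -> (0 < eps)%R -> (0 < s0)%R ->
  exists s, (0 < s < s0)%R /\ (0 < Re (p z0) + s * (Re (c * (z0 * d)) + eps))%R.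
Proof.
  intros Hc Heps Hs0.
  set (m := Cmod (z0 * c)).
  assert (Hm : (0 <= m)%R) by apply Cmod_ge_0.
  destruct (has_cderiv_approx p z0 d p_deriv (eps / (m + 1)))
    as [del [Hdel Happrox]]; [apply Rdiv_lt_0_compat; lra |].
  pose proof (Cmod_ge_0 c).
  set (A := (-2 * Re c / (Cmod c ^ 2 + 1))%R).
  set (B := (del / (m + 1))%R).
  assert (HA : (0 < A)%R) by (apply Rdiv_lt_0_compat; nra).
  assert (HB : (0 < B)%R) by (apply Rdiv_lt_0_compat; lra).
  set (s := (Rmin s0 (Rmin A B) / 2)%R).
  assert (Hs : (0 < s < s0 /\ s < A /\ s < B)%R).
  { pose proof (Rmin_pos s0 _ Hs0 (Rmin_pos _ _ HA HB)).
    pose proof (Rmin_l s0 (Rmin A B)). pose proof (Rmin_r s0 (Rmin A B)).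
    pose proof (Rmin_l A B). pose proof (Rmin_r A B).
    unfold s; lra. }
  assert (HsA : (s * (Cmod c ^ 2 + 1) < -2 * Re c)%R) by (apply Rlt_div_r; [nra | apply Hs]).
  assert (HsB : (s * (m + 1) < del)%R) by (apply Rlt_div_r; [lra | apply Hs]).
  exists s; split; [lra |].
  set (h := RtoC s * (z0 * c)).
  assert (Hh : Cmod h = (s * m)%R).
  { unfold h. rewrite Cmod_mult, Cmod_R, Rabs_pos_eq; [reflexivity | lra]. }
  assert (Hinside : (0 < Re (p (z0 + h)))%R).
  { apply Re_pos_inside.
    replace (z0 + h) with (z0 * (1 + RtoC s * c)) by (unfold h; ring).
    rewrite Cmod_mult.
    assert (Cmod (1 + RtoC s * c) < 1)%R by (apply Cmod_1_add_scal_lt_1; nra).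
    nra. }
  assert (Herr : (Cmod (p (z0 + h) - p z0 - h * d)%C <= eps / (m + 1) * (s * m))%R).
  { rewrite <- Hh. apply Happrox. rewrite Hh. lra. }
  assert (Hsplit : Re (p (z0 + h)) =
            (Re (p z0) + s * Re (c * (z0 * d)) + Re (p (z0 + h) - p z0 - h * d))%R).
  { replace (h * d) with (RtoC s * (c * (z0 * d))) by (unfold h; ring).
    destruct (p (z0 + h)), (p z0), (c * (z0 * d)). simpl. ring. }
  pose proof (re_le_Cmod (p (z0 + h) - p z0 - h * d)).
  pose proof (Rle_abs (Re (p (z0 + h) - p z0 - h * d))).
  assert (eps / (m + 1) * (s * m) <= s * eps)%R.
  { rewrite <- Rmult_assoc, (Rmult_comm _ s), Rmult_assoc.
    apply Rmult_le_compat_l; [lra |].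
    apply (Rmult_le_reg_r (m + 1)); [lra |].
    field_simplify; lra. }
  nra.
Qed.

Lemma Re_nonneg_at_least_modulus : (0 <= Re (p z0))%R.
Proof.
  apply Rnot_lt_le; intro Hneg.
  set (K := (Rabs (Re (RtoC (-1) * (z0 * d))) + 1)%R).
  assert (HK : (0 < K)%R) by (unfold K; pose proof (Rabs_pos (Re (RtoC (-1) * (z0 * d)))); lra).
  destruct (Re_first_order (RtoC (-1)) 1 (- Re (p z0) / K)) as [s [[Hs Hs0] Hpos]];
    [simpl; lra | lra | apply Rdiv_lt_0_compat; lra |].
  apply Rlt_div_r in Hs0; [| exact HK].
  pose proof (Rle_abs (Re (RtoC (-1) * (z0 * d)))).
  unfold K in Hs0. nra.
Qed.

Lemma Re_mul_nonneg_of_Re_eq_0 : Re (p z0) = 0%R ->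
  forall c, (Re c < 0)%R -> (0 <= Re (c * (z0 * d)))%R.
Proof.
  intros H0 c Hc.
  apply Rle_plus_epsilon; intros eps Heps.
  destruct (Re_first_order c eps 1 Hc Heps Rlt_0_1) as [s [[Hs _] Hpos]].
  rewrite H0 in Hpos. nra.
Qed.

Lemma jack_lemma : (Re (p z0) <= 0)%R ->
  Re (p z0) = 0%R /\ Im (z0 * d) = 0%R /\ (Re (z0 * d) <= 0)%R.
Proof.
  intros Hnonpos.
  assert (H0 : Re (p z0) = 0%R) by (pose proof Re_nonneg_at_least_modulus; lra).
  split; [exact H0 |].
  exact (real_nonpos_of_Re_mul_nonneg _ (Re_mul_nonneg_of_Re_eq_0 H0)).
Qed.

End Jack.

Lemma imaginary_value_inadmissible (alpha beta b x : R) (q : C) :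
  (0 <= alpha)%R -> (0 < beta)%R -> (0 < Re q)%R -> (x <= 0)%R ->
  RtoC beta * (0, b) + RtoC alpha <> 0 ->
  (0, b) * q + RtoC x / (RtoC beta * (0, b) + RtoC alpha) <> 1.
Proof.
  intros Halpha Hbeta Hq Hx Hden Heq.
  assert (E : (0, b) * q * (RtoC beta * (0, b) + RtoC alpha) + RtoC x
              = RtoC beta * (0, b) + RtoC alpha).
  { rewrite <- (Cmult_1_l (RtoC beta * (0, b) + RtoC alpha)) at 2.
    rewrite <- Heq. field. exact Hden. }
  destruct q as [q1 q2]; simpl in Hq.
  pose proof (f_equal Re E) as Ere. pose proof (f_equal Im E) as Eim.
  simpl in Ere, Eim.
  destruct (Req_dec b 0) as [Hb0 | Hb0].
  - subst b. apply Hden. apply injective_projections; simpl; nra.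
  - assert (Him : (q1 * alpha - q2 * beta * b = beta)%R).
    { apply (Rmult_eq_reg_l b); [nra | exact Hb0]. }
    (* Eliminating q2: beta x = Re q (alpha^2 + beta^2 b^2) > 0. *)
    assert (Hkey : (beta * x = q1 * (alpha ^ 2 + b ^ 2 * beta ^ 2))%R) by nra.
    assert (0 < q1 * (alpha ^ 2 + b ^ 2 * beta ^ 2))%R.
    { apply Rmult_lt_0_compat; [exact Hq |].
      pose proof (pow2_gt_0 b Hb0). pose proof (pow2_gt_0 beta ltac:(lra)). nra. }
    nra.
Qed.

Theorem mainTheorem4 (p dp Q : C -> C) (alpha beta : R)
  (hp : forall z : C, unit_disk z -> has_cderiv p z (dp z))
  (hp0 : p 0 = 1)
  (hQ : caratheodory Q)
  (halpha : (0 <= alpha)%R) (hbeta : (0 < beta)%R)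
  (hden : forall z : C, unit_disk z -> RtoC beta * p z + RtoC alpha <> 0)
  (heq : forall z : C, unit_disk z ->
     p z * Q z + z * dp z / (RtoC beta * p z + RtoC alpha) = 1) :
  forall z : C, unit_disk z -> (0 < Re (p z))%R.
Proof.
  intros z1 Hz1. apply NNPP; intro Hfail.
  assert (Hopen : forall t, unit_disk t -> (0 < Re (p t))%R -> exists del, (0 < del)%R /\
                    forall z, (Cmod (z - t) < del)%R -> (0 < Re (p z))%R)
    by (intros t Ht; exact (Re_pos_near p t (dp t) (hp t Ht))).
  destruct (least_modulus_counterexample _ Hopen z1 Hz1 Hfail) as [z0 [Hz0 [Hfail0 Hinside]]].
  assert (Hz0_pos : (0 < Cmod z0)%R).
  { apply Cmod_gt_0. intros ->. apply Hfail0. rewrite hp0. simpl. lra. }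
  destruct hQ as [_ [_ HQ]].
  destruct (jack_lemma p z0 (dp z0) (hp z0 Hz0) Hz0_pos Hinside (Rnot_lt_le _ _ Hfail0))
    as [Hre [Him Hx]].
  assert (Ep : p z0 = (0, Im (p z0))%R) by (apply injective_projections; [exact Hre | reflexivity]).
  assert (Ew : z0 * dp z0 = RtoC (Re (z0 * dp z0)))
    by (apply injective_projections; [reflexivity | exact Him]).
  apply (imaginary_value_inadmissible alpha beta (Im (p z0)) (Re (z0 * dp z0)) (Q z0));
    [exact halpha | exact hbeta | exact (HQ z0 Hz0) | exact Hx | rewrite <- Ep; exact (hden z0 Hz0) |].
  rewrite <- Ep, <- Ew. exact (heq z0 Hz0).
Qed.
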